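(* Let $0<q<1$. Then \[ \sum_{n=0}^{\infty}\frac{(1-q^{4n+3})(1-q^{2n+1})(1/2|q^{2})_{n}^{2}(1/3|q^{2})_{n}(2/3|q^{2})_{n}}{(1-q^{2})(1-q^{2n+2})([n]_{q^{2}}!)^{2}(7/6|q^{2})_{n+1}(5/6|q^{2})_{n+1}}\,q^{2n} =\frac{[1/6]_{q^{2}}\,(q^{4/3},q^{2/3};q^{2})_{\infty}\,q^{1/4}}{[1/3]_{q^{2}}[2/3]_{q^{2}}[1/2]_{q^{2}}\,(q^{1/3},q^{5/3};q^{2})_{\infty}\,\pi_{q}}. \]
   Context: Let $0<q<1$ and write $q^{x}=e^{x\log q}$. $(z;q)_\infty=\prod_{k\ge0}(1-zq^k)$, $(z_1,z_2;q)_\infty=(z_1;q)_\infty(z_2;q)_\infty$. $[z]_{q^2}=\frac{1-q^{2z}}{1-q^2}$; for integers $n\ge0$, $(x|q^2)_n=\prod_{k=0}^{n-1}[x+k]_{q^2}$ (empty product $=1$); $[0]_{q^2}!=1$, $[n]_{q^2}!=\prod_{k=1}^n[k]_{q^2}$. $\pi_q=(1-q^2)q^{1/4}\frac{(q^2;q^2)_\infty^2}{(q;q^2)_\infty^2}$. *)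

From Stdlib Require Import Reals Lra Classical ClassicalEpsilon.
Open Scope R_scope.

Definition qpow (q x : R) : R := Rpower q x.

Fixpoint prodR (f : nat -> R) (n : nat) : R :=
  match n with O => 1 | S m => prodR f m * f m end.

(* the limit of a sequence if it converges, 0 otherwise *)
Definition seq_lim (u : nat -> R) : R :=
  match excluded_middle_informative (exists l, Un_cv u l) with
  | left H => proj1_sig (constructive_indefinite_description _ H)
  | right _ => 0
  end.

Definition qpoch_inf (z p : R) : R :=
  seq_lim (fun N => prodR (fun k => 1 - z * p ^ k) N).

(* [z]_{q^2} = (1 - q^{2z}) / (1 - q^2) *)
Definition qbr (q z : R) : R := (1 - qpow q (2 * z)) / (1 - q ^ 2).

(* (x|q^2)_n = prod_{k=0}^{n-1} [x+k]_{q^2} *)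
Definition qshift (q x : R) (n : nat) : R :=
  prodR (fun k => qbr q (x + INR k)) n.

Definition qfact (q : R) (n : nat) : R :=
  prodR (fun k => qbr q (INR (S k))) n.

Definition pi_q (q : R) : R :=
  (1 - q ^ 2) * qpow q (1/4) * (qpoch_inf (q^2) (q^2)) ^ 2
    / (qpoch_inf q (q^2)) ^ 2.

From Stdlib Require Import Reals Lra Lia ClassicalEpsilon.
From Coquelicot Require Import Coquelicot.
Open Scope R_scope.

(* The partial sums telescope to an explicit product of q-shifted factorials
   ([closed_partial_sum]).  Writing q = r^3 and p = q^2 = r^6, every bracket
   [m/6 + k]_{q^2} becomes (1 - r^m p^k)/(1 - p), so both the telescoping step and
   the comparison with the right-hand side are rational identities in r and p^n.
   The partial products (z;p)_n decrease and stay above half of (z;p)_M for M large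
   (Weierstrass' inequality on the tail), so they converge to a positive limit;
   letting N go to infinity and using (r;p)_oo = (1 - r) (r^7;p)_oo gives the
   right-hand side. *)

Lemma seq_lim_eq (u : nat -> R) (l : R) : Un_cv u l -> seq_lim u = l.
Proof.
  intros Hl; unfold seq_lim.
  destruct excluded_middle_informative as [Hex | Hnex].
  - destruct (constructive_indefinite_description _ Hex) as [l' Hl']; simpl.
    exact (UL_sequence u l' l Hl' Hl).
  - exfalso; apply Hnex; exists l; exact Hl.
Qed.

Lemma pow_unit_interval (x : R) (n : nat) : 0 <= x <= 1 -> 0 <= x ^ n <= 1.
Proof.
  intros Hx; split; [now apply pow_le|].
  rewrite <- (pow1 n); apply pow_incr; lra.
Qed.

Lemma pow_open_unit_interval (x : R) (k : nat) : 0 < x < 1 -> (0 < k)%nat -> 0 < x ^ k < 1.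
Proof.
  intros Hx Hk; split; [now apply pow_lt|].
  apply pow_lt_1_compat; [lra | exact Hk].
Qed.

Definition qpoch (z p : R) (n : nat) : R := prodR (fun k => 1 - z * p ^ k) n.

Lemma qpoch0 (z p : R) : qpoch z p 0 = 1.
Proof. reflexivity. Qed.

Lemma qpochS (z p : R) (n : nat) : qpoch z p (S n) = qpoch z p n * (1 - z * p ^ n).
Proof. reflexivity. Qed.

Lemma qpoch_add (z p : R) (m n : nat) :
  qpoch z p (m + n) = qpoch z p m * qpoch (z * p ^ m) p n.
Proof.
  induction n as [|n IH].
  - rewrite Nat.add_0_r; unfold qpoch; simpl; ring.
  - rewrite Nat.add_succ_r, !qpochS, IH, pow_add; ring.
Qed.

Section QPochhammerBounds.
Variables (z p : R).
Hypotheses (hz : 0 <= z <= 1) (hp : 0 <= p <= 1).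

Lemma qpoch_factor_bounds (k : nat) : 0 <= z * p ^ k <= 1.
Proof. pose proof (pow_unit_interval p k hp); split; nra. Qed.

Lemma qpoch_unit_interval (n : nat) : 0 <= qpoch z p n <= 1.
Proof.
  induction n as [|n IH]; [unfold qpoch; simpl; lra|].
  rewrite qpochS; pose proof (qpoch_factor_bounds n); split; nra.
Qed.

Lemma qpoch_decr (n : nat) : qpoch z p (S n) <= qpoch z p n.
Proof.
  rewrite qpochS; pose proof (qpoch_factor_bounds n); pose proof (qpoch_unit_interval n); nra.
Qed.

Lemma qpoch_pos (n : nat) : z < 1 -> 0 < qpoch z p n.
Proof.
  intros hz1; induction n as [|n IH]; [unfold qpoch; simpl; lra|].
  rewrite qpochS; pose proof (pow_unit_interval p n hp).
  apply Rmult_lt_0_compat; [exact IH | nra].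
Qed.

(* Weierstrass' product inequality, with the geometric sum of the [z p^k] evaluated. *)
Lemma qpoch_ge_geometric (n : nat) : p < 1 -> 1 - z * (1 - p ^ n) / (1 - p) <= qpoch z p n.
Proof.
  intros hp1; induction n as [|n IH]; [unfold qpoch; simpl; lra|].
  rewrite qpochS; pose proof (qpoch_factor_bounds n); pose proof (qpoch_unit_interval n).
  assert (Hsum : z * (1 - p ^ S n) / (1 - p) = z * (1 - p ^ n) / (1 - p) + z * p ^ n)
    by (simpl; field; lra).
  rewrite Hsum; nra.
Qed.

End QPochhammerBounds.

Section QPochhammerLimit.
Variables (z p : R).
Hypotheses (hz : 0 <= z < 1) (hp : 0 < p < 1).

Lemma qpoch_cvg : is_lim_seq (qpoch z p) (qpoch_inf z p).
Proof.
  destruct (ex_finite_lim_seq_decr (qpoch z p) 0) as [l Hl].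
  - intros n; apply qpoch_decr; lra.
  - intros n; apply qpoch_unit_interval; lra.
  - replace (qpoch_inf z p) with l; [exact Hl|].
    symmetry; apply seq_lim_eq, is_lim_seq_Reals, Hl.
Qed.

Lemma qpoch_inf_pos : 0 < qpoch_inf z p.
Proof.
  destruct (pow_lt_1_zero p ltac:(rewrite Rabs_pos_eq; lra) ((1 - p) / 2) ltac:(lra))
    as [M HM].
  specialize (HM M (le_n M)); rewrite Rabs_pos_eq in HM by (apply pow_le; lra).
  pose proof (qpoch_pos z p ltac:(lra) ltac:(lra) M ltac:(lra)) as HPM.
  assert (Htail : forall n, qpoch z p M / 2 <= qpoch z p (n + M)).
  { intros n; rewrite Nat.add_comm, qpoch_add.
    pose proof (pow_unit_interval p n ltac:(lra)).
    assert (Hz' : 0 <= z * p ^ M <= 1) by (apply qpoch_factor_bounds; lra).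
    pose proof (qpoch_ge_geometric (z * p ^ M) p Hz' ltac:(lra) n ltac:(lra)) as Hge.
    assert (Hgeom : z * p ^ M * (1 - p ^ n) / (1 - p) <= 1 / 2).
    { apply Rmult_le_reg_r with (1 - p); [lra|].
      field_simplify; [|lra]; nra. }
    nra. }
  pose proof (proj1 (is_lim_seq_incr_n _ M _) qpoch_cvg) as Hlim.
  pose proof (is_lim_seq_le _ _ _ _ Htail (is_lim_seq_const _) Hlim) as Hle.
  simpl in Hle; lra.
Qed.

End QPochhammerLimit.

Lemma qpoch_inf_shift (z p : R) : 0 <= z < 1 -> 0 < p < 1 ->
  qpoch_inf z p = (1 - z) * qpoch_inf (z * p) p.
Proof.
  intros hz hp.
  assert (Hshift : forall n, qpoch z p (S n) = (1 - z) * qpoch (z * p) p n).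
  { intros n; change (S n) with (1 + n)%nat; rewrite qpoch_add.
    unfold qpoch at 1; simpl; ring_simplify (p * 1); ring. }
  pose proof (proj1 (is_lim_seq_incr_1 _ _) (qpoch_cvg z p hz hp)) as H1.
  pose proof (is_lim_seq_scal_l _ (1 - z) _ (qpoch_cvg (z * p) p ltac:(nra) hp)) as H2.
  apply (is_lim_seq_ext _ (fun n => qpoch z p (S n))) in H2; [|intros n; now rewrite Hshift].
  apply is_lim_seq_unique in H1, H2; rewrite H1 in H2; now injection H2.
Qed.

Lemma qpow_cube (r x : R) (m : nat) : 0 < r -> 3 * x = INR m -> qpow (r ^ 3) x = r ^ m.
Proof.
  intros hr hx; unfold qpow.
  rewrite <- (Rpower_pow 3 r hr), Rpower_mult.
  replace (INR 3 * x) with (INR m) by (simpl; lra).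
  now apply Rpower_pow.
Qed.

Lemma qbr_add_INR (q x : R) (k : nat) : 0 < q ->
  qbr q (x + INR k) = (1 - qpow q (2 * x) * (q ^ 2) ^ k) / (1 - q ^ 2).
Proof.
  intros hq; unfold qbr, qpow.
  replace (2 * (x + INR k)) with (2 * x + INR 2 * INR k) by (simpl; ring).
  rewrite Rpower_plus, <- (Rpower_mult q (INR 2) (INR k)), (Rpower_pow 2 q hq).
  rewrite Rpower_pow; [reflexivity | now apply pow_lt].
Qed.

Lemma qshift_qpoch (q x : R) (n : nat) : 0 < q < 1 ->
  qshift q x n = qpoch (qpow q (2 * x)) (q ^ 2) n / (1 - q ^ 2) ^ n.
Proof.
  intros hq; assert (hq2 : q ^ 2 < 1) by nra.
  induction n as [|n IH]; [unfold qshift, qpoch; simpl; field|].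
  change (qshift q x n * qbr q (x + INR n) = qpoch (qpow q (2 * x)) (q ^ 2) (S n) / (1 - q ^ 2) ^ S n).
  rewrite IH, qpochS, qbr_add_INR, <- (tech_pow_Rmult (1 - q ^ 2) n) by lra.
  field; split; [apply pow_nonzero |]; lra.
Qed.

Lemma qfact_qshift (q : R) (n : nat) : qfact q n = qshift q 1 n.
Proof.
  induction n as [|n IH]; [reflexivity|].
  change (qfact q n * qbr q (INR (S n)) = qshift q 1 n * qbr q (1 + INR n)).
  now rewrite IH, S_INR, Rplus_comm.
Qed.

Lemma pow_double_add (x : R) (n k : nat) : x ^ (2 * n + k) = x ^ k * (x ^ 2) ^ n.
Proof. rewrite pow_add, pow_mult; ring. Qed.

Definition summand (q : R) (n : nat) : R :=
  (1 - q ^ (4 * n + 3)) * (1 - q ^ (2 * n + 1))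
  * (qshift q (1/2) n) ^ 2 * qshift q (1/3) n * qshift q (2/3) n
  / ((1 - q ^ 2) * (1 - q ^ (2 * n + 2)) * (qfact q n) ^ 2
     * qshift q (7/6) (S n) * qshift q (5/6) (S n))
  * q ^ (2 * n).

Section CubeRoot.
Variable r : R.
Hypothesis hr : 0 < r < 1.
Local Notation q := (r ^ 3).
Local Notation p := ((r ^ 3) ^ 2).

Lemma cube_unit : 0 < q < 1.
Proof. apply pow_open_unit_interval; [exact hr | lia]. Qed.

Lemma square_cube_unit : 0 < p < 1.
Proof. apply pow_open_unit_interval; [exact cube_unit | lia]. Qed.

Lemma root_pow_unit (m : nat) : (0 < m)%nat -> 0 <= r ^ m < 1.
Proof. intros hm; pose proof (pow_open_unit_interval r m hr hm); lra. Qed.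

Lemma qpoch_square_cube_pos (z : R) (n : nat) : 0 <= z < 1 -> 0 < qpoch z p n.
Proof. intros hz; pose proof square_cube_unit; apply qpoch_pos; lra. Qed.

Lemma summand_qpoch (n : nat) :
  summand q n =
  (1 - q ^ 3 * (p ^ n) ^ 2) * (1 - q * p ^ n) * (1 - p)
  * qpoch q p n ^ 2 * qpoch (r ^ 2) p n * qpoch (r ^ 4) p n
  / ((1 - p * p ^ n) * qpoch p p n ^ 2 * qpoch (r ^ 7) p (S n) * qpoch (r ^ 5) p (S n))
  * p ^ n.
Proof.
  pose proof cube_unit as hq; pose proof square_cube_unit as hp.
  unfold summand.
  rewrite qfact_qshift, !qshift_qpoch by exact hq.
  rewrite (qpow_cube r (2 * (1/2)) 3), (qpow_cube r (2 * (1/3)) 2), (qpow_cube r (2 * (2/3)) 4),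
    (qpow_cube r (2 * (7/6)) 7), (qpow_cube r (2 * (5/6)) 5) by (simpl; lra).
  unfold qpow at 1; replace (2 * 1) with (INR 2) by (simpl; lra); rewrite Rpower_pow by lra.
  replace (4 * n + 3)%nat with (2 * (n * 2) + 3)%nat by lia.
  rewrite !pow_double_add, (pow_mult (q ^ 2) n 2), (pow_mult q 2 n), pow_1.
  assert (hu : 0 < p ^ n <= 1) by (split; [apply pow_lt | apply pow_unit_interval]; lra).
  pose proof (qpoch_square_cube_pos p n ltac:(lra)).
  pose proof (qpoch_square_cube_pos (r ^ 7) (S n) (root_pow_unit 7 ltac:(lia))).
  pose proof (qpoch_square_cube_pos (r ^ 5) (S n) (root_pow_unit 5 ltac:(lia))).
  rewrite <- (tech_pow_Rmult (1 - p) n).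
  field; repeat split; try apply pow_nonzero; nra.
Qed.

(* (1/2|q^2)_{n+1} (1/2|q^2)_{n+2} (1/3|q^2)_{n+1} (2/3|q^2)_{n+1}
   / ([1/2] [1/3] [2/3] [n]! [n+1]! (7/6|q^2)_{n+1} (5/6|q^2)_{n+1}). *)
Definition closed_partial_sum (n : nat) : R :=
  (1 - p) / ((1 - q) * (1 - r ^ 2) * (1 - r ^ 4))
  * (qpoch q p (S n) * qpoch q p (S (S n)) * qpoch (r ^ 2) p (S n) * qpoch (r ^ 4) p (S n)
     / (qpoch p p n * qpoch p p (S n) * qpoch (r ^ 7) p (S n) * qpoch (r ^ 5) p (S n))).

Lemma sum_summand_closed (n : nat) : sum_f_R0 (summand q) n = closed_partial_sum n.
Proof.
  pose proof cube_unit as hq; pose proof square_cube_unit as hp.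
  pose proof (root_pow_unit 2 ltac:(lia)); pose proof (root_pow_unit 4 ltac:(lia)).
  pose proof (root_pow_unit 5 ltac:(lia)); pose proof (root_pow_unit 7 ltac:(lia)).
  induction n as [|n IH].
  - simpl sum_f_R0; rewrite summand_qpoch; unfold closed_partial_sum.
    rewrite !qpochS, !qpoch0, !pow_O.
    field; repeat split; nra.
  - rewrite tech5, IH, summand_qpoch; unfold closed_partial_sum; rewrite !qpochS.
    rewrite <- !(tech_pow_Rmult p).
    assert (hu : 0 < p ^ n <= 1) by (split; [apply pow_lt | apply pow_unit_interval]; lra).
    pose proof (qpoch_square_cube_pos q n ltac:(lra)).
    pose proof (qpoch_square_cube_pos p n ltac:(lra)).
    pose proof (qpoch_square_cube_pos (r ^ 2) n ltac:(lra)).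
    pose proof (qpoch_square_cube_pos (r ^ 4) n ltac:(lra)).
    pose proof (qpoch_square_cube_pos (r ^ 5) n ltac:(lra)).
    pose proof (qpoch_square_cube_pos (r ^ 7) n ltac:(lra)).
    assert (hpu : 0 < p * p ^ n <= 1) by (split; [apply Rmult_lt_0_compat|]; nra).
    field; repeat split; nra.
Qed.

Lemma closed_partial_sum_cvg :
  is_lim_seq closed_partial_sum
    ((1 - p) / ((1 - q) * (1 - r ^ 2) * (1 - r ^ 4))
     * (qpoch_inf q p * qpoch_inf q p * qpoch_inf (r ^ 2) p * qpoch_inf (r ^ 4) p
        / (qpoch_inf p p * qpoch_inf p p * qpoch_inf (r ^ 7) p * qpoch_inf (r ^ 5) p))).
Proof.
  pose proof cube_unit as hq; pose proof square_cube_unit as hp.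
  assert (Hcvg : forall z, 0 <= z < 1 -> is_lim_seq (qpoch z p) (qpoch_inf z p))
    by (intros z hz; exact (qpoch_cvg z p hz hp)).
  assert (HcvgS : forall z, 0 <= z < 1 -> is_lim_seq (fun n => qpoch z p (S n)) (qpoch_inf z p))
    by (intros z hz; exact (proj1 (is_lim_seq_incr_1 _ _) (Hcvg z hz))).
  assert (HcvgSS : forall z, 0 <= z < 1 ->
    is_lim_seq (fun n => qpoch z p (S (S n))) (qpoch_inf z p))
    by (intros z hz; exact (proj1 (is_lim_seq_incr_1 _ _) (HcvgS z hz))).
  pose proof (root_pow_unit 2 ltac:(lia)); pose proof (root_pow_unit 4 ltac:(lia)).
  pose proof (root_pow_unit 5 ltac:(lia)); pose proof (root_pow_unit 7 ltac:(lia)).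
  apply is_lim_seq_mult'; [apply is_lim_seq_const|].
  apply is_lim_seq_div'.
  - apply is_lim_seq_mult'; [apply is_lim_seq_mult'; [apply is_lim_seq_mult'|]|].
    + apply HcvgS; lra.
    + apply HcvgSS; lra.
    + apply HcvgS; lra.
    + apply HcvgS; lra.
  - apply is_lim_seq_mult'; [apply is_lim_seq_mult'; [apply is_lim_seq_mult'|]|].
    + apply Hcvg; lra.
    + apply HcvgS; lra.
    + apply HcvgS; lra.
    + apply HcvgS; lra.
  - pose proof (qpoch_inf_pos p p ltac:(lra) hp).
    pose proof (qpoch_inf_pos (r ^ 7) p ltac:(lra) hp).
    pose proof (qpoch_inf_pos (r ^ 5) p ltac:(lra) hp).
    apply Rgt_not_eq; repeat apply Rmult_lt_0_compat; assumption.
Qed.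

Lemma rhs_qpoch_inf :
  qbr q (1/6) * (qpoch_inf (qpow q (4/3)) p * qpoch_inf (qpow q (2/3)) p) * qpow q (1/4)
  / (qbr q (1/3) * qbr q (2/3) * qbr q (1/2)
     * (qpoch_inf (qpow q (1/3)) p * qpoch_inf (qpow q (5/3)) p) * pi_q q)
  = (1 - p) / ((1 - q) * (1 - r ^ 2) * (1 - r ^ 4))
    * (qpoch_inf q p * qpoch_inf q p * qpoch_inf (r ^ 2) p * qpoch_inf (r ^ 4) p
       / (qpoch_inf p p * qpoch_inf p p * qpoch_inf (r ^ 7) p * qpoch_inf (r ^ 5) p)).
Proof.
  pose proof cube_unit as hq; pose proof square_cube_unit as hp.
  pose proof (root_pow_unit 1 ltac:(lia)); pose proof (root_pow_unit 2 ltac:(lia)).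
  pose proof (root_pow_unit 4 ltac:(lia)); pose proof (root_pow_unit 5 ltac:(lia)).
  pose proof (root_pow_unit 7 ltac:(lia)).
  unfold pi_q, qbr.
  rewrite (qpow_cube r (2 * (1/6)) 1), (qpow_cube r (4/3) 4), (qpow_cube r (2/3) 2),
    (qpow_cube r (2 * (1/3)) 2), (qpow_cube r (2 * (2/3)) 4), (qpow_cube r (2 * (1/2)) 3),
    (qpow_cube r (1/3) 1), (qpow_cube r (5/3) 5) by (simpl; lra).
  rewrite (qpoch_inf_shift (r ^ 1) p) by lra.
  replace (r ^ 1 * p) with (r ^ 7) by ring.
  assert (hq4 : 0 < qpow q (1/4)) by apply exp_pos.
  pose proof (qpoch_inf_pos q p ltac:(lra) hp); pose proof (qpoch_inf_pos p p ltac:(lra) hp).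
  pose proof (qpoch_inf_pos (r ^ 2) p ltac:(lra) hp).
  pose proof (qpoch_inf_pos (r ^ 4) p ltac:(lra) hp).
  pose proof (qpoch_inf_pos (r ^ 5) p ltac:(lra) hp).
  pose proof (qpoch_inf_pos (r ^ 7) p ltac:(lra) hp).
  field; repeat split; nra.
Qed.

End CubeRoot.

Lemma qpow_third_cube (q : R) : 0 < q -> qpow q (1/3) ^ 3 = q.
Proof.
  intros hq; unfold qpow.
  rewrite <- Rpower_pow, Rpower_mult by apply exp_pos.
  replace (1/3 * INR 3) with 1 by (simpl; field).
  now apply Rpower_1.
Qed.

Theorem mainTheorem12 (q : R) (hq0 : 0 < q) (hq1 : q < 1) :
  infinite_sum
    (fun n : nat =>
       (1 - q ^ (4 * n + 3)) * (1 - q ^ (2 * n + 1))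
       * (qshift q (1/2) n) ^ 2 * qshift q (1/3) n * qshift q (2/3) n
       / ((1 - q ^ 2) * (1 - q ^ (2 * n + 2)) * (qfact q n) ^ 2
          * qshift q (7/6) (S n) * qshift q (5/6) (S n))
       * q ^ (2 * n))
    (qbr q (1/6) * (qpoch_inf (qpow q (4/3)) (q^2) * qpoch_inf (qpow q (2/3)) (q^2))
       * qpow q (1/4)
     / (qbr q (1/3) * qbr q (2/3) * qbr q (1/2)
        * (qpoch_inf (qpow q (1/3)) (q^2) * qpoch_inf (qpow q (5/3)) (q^2))
        * pi_q q)).
Proof.
  pose proof (qpow_third_cube q hq0) as hcube.
  set (r := qpow q (1/3)) in hcube.
  assert (hr : 0 < r < 1).
  { split; [apply exp_pos|].
    destruct (Rlt_or_le r 1) as [hlt | hge]; [exact hlt|].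
    pose proof (pow_R1_Rle r 3 hge); lra. }
  clearbody r; subst q.
  rewrite (rhs_qpoch_inf r hr).
  apply is_lim_seq_Reals.
  apply (is_lim_seq_ext (closed_partial_sum r)); [intros n; symmetry; now apply sum_summand_closed|].
  now apply closed_partial_sum_cvg.
Qed.
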